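(* Let $n\in\mathbb{N}$ and for $c\in\mathbb{R}$ let $D_{2n}(z;c) = \prod_{j=1}^{2n}[z-(j-1)] + (-1)^n c$, $z\in\mathbb{C}$, with roots $\alpha_1(c),\dots,\alpha_{2n}(c)$ (with multiplicity). Write \[ D_{2n}(z-(1/2);c) = q_{2n}z^{2n}+q_{2n-1}z^{2n-1}+\cdots+q_1 z + [q_0+(-1)^n c], \] so that $q_0 = (4n-1)!!/2^{2n}$. Let $a_k=q_k$ for $1\leq k\leq 2n$, $a_0 = q_0+(-1)^nc$, and $a_k=0$ for $k<0$ or $k>2n$, and let $H_{2n}(c)$ be the $2n\times 2n$ Hurwitz matrix with entries $(H_{2n}(c))_{i,j} = a_{2n-2j+i}$, $1\leq i,j\leq 2n$. Let $h_{n-1}(c)$ be the determinant of the upper-left $(2n-1)\times(2n-1)$ submatrix of $H_{2n}(c)$, so that $\det(H_{2n}(c)) = [q_0+(-1)^nc]\,h_{n-1}(c)$. If $j\in\{1,\dots,2n\}$ and $c\in\mathbb{R}$ are such that $\Re(\alpha_j(c))=-1/2$, then $\det(H_{2n}(c))=0$, that is, $c=(-1)^{n-1}q_0$ or $h_{n-1}(c)=0$.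
   Context: $h_{n-1}$ is a polynomial in $c$ of degree $n-1$ with rational coefficients, and $\det(H_{2n}(\cdot))$ is a polynomial in $c$ of degree $n$. *)

From HB Require Import structures.
From mathcomp Require Import all_boot all_order all_algebra.
From mathcomp Require Import complex.
Set Implicit Arguments. Unset Strict Implicit. Unset Printing Implicit Defensive.
Import Order.TTheory GRing.Theory Num.Theory.
Local Open Scope ring_scope.

Definition Dpoly (F : comNzRingType) (n : nat) (c : F) : {poly F} :=
  \prod_(j < 2 * n) ('X - (j%:R)%:P) + ((-1) ^+ n * c)%:P.

Definition Dshift (F : fieldType) (n : nat) (c : F) : {poly F} :=
  Dpoly n c \Po ('X - (2%:R^-1)%:P).

Definition q0 (F : fieldType) (n : nat) : F := (Dshift n 0)`_0.

Definition hcoef (F : fieldType) (n : nat) (c : F) (k : int) : F :=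
  match k with
  | Posz m => if (m <= 2 * n)%N then (Dshift n c)`_m else 0
  | Negz _ => 0
  end.

(* the k x k upper-left block of the Hurwitz matrix with (1-based) entries
   a_{2n - 2j + i}; written with 0-based indices i, j *)
Definition hurwitz_block (F : fieldType) (n : nat) (c : F) (k : nat) : 'M[F]_k :=
  \matrix_(i < k, j < k)
     hcoef n c ((2 * n)%:Z - 2%:Z * (j.+1)%:Z + (i.+1)%:Z).

Definition H2n (F : fieldType) (n : nat) (c : F) : 'M[F]_(2 * n) :=
  hurwitz_block n c (2 * n).

Definition hn1 (F : fieldType) (n : nat) (c : F) : F :=
  \det (hurwitz_block n c (2 * n).-1).

From mathcomp Require Import all_boot all_algebra.
From mathcomp Require Import complex zify.

(* Put w = z + 1/2 = i y and p(w) = D_{2n}(w - 1/2; c), so that H_{2n} is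
   built from the coefficients a_k of p.  Splitting p(X) = E(X^2) + X O(X^2)
   into even and odd parts, p(i y) = 0 gives E(t) = 0 and t O(t) = 0 for
   t = -y^2.  Row i of H_{2n} applied to the vector (t^(2n-1-j))_j is, after
   reversing j, t^r E(t) or t^(r+1) O(t) according to the parity of 2n-1-i, so
   this vector lies in the kernel of H_{2n}; when t <> 0 its first 2n-1 entries
   lie in the kernel of the leading minor, whose dropped column only involves
   coefficients a_k with k < 0.  When t = 0, E(0) = a_0 = q_0 + (-1)^n c
   vanishes instead. *)

Set Implicit Arguments. Unset Strict Implicit. Unset Printing Implicit Defensive.
Import GRing.Theory.
Local Open Scope ring_scope.

Definition coefz (R : nzSemiRingType) (p : {poly R}) (k : int) : R :=
  if k is Posz m then p`_m else 0.

Definition hurwitz_mx (R : nzSemiRingType) (p : {poly R}) (N k : nat) : 'M[R]_k :=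
  \matrix_(i < k, j < k) coefz p (N%:Z - 2%:Z * (j.+1)%:Z + (i.+1)%:Z).

Section HurwitzKernel.
Variables (R : comNzRingType) (p : {poly R}) (t : R).

Lemma coefz_lt0 k : k < 0 -> coefz p k = 0.
Proof. by case: k. Qed.

Lemma sum_coefz_shift M (b : bool) r : (b + r <= M)%N ->
  \sum_(m < M) coefz p ((2 * m)%N%:Z - (b + r.*2)%N%:Z) * t ^+ m =
  t ^+ (b + r) * \sum_(k < M - (b + r)) p`_(k.*2 + b) * t ^+ k.
Proof.
move=> le_rb_M.
rewrite -(big_mkord xpredT (fun m => coefz p ((2 * m)%N%:Z - (b + r.*2)%N%:Z) * t ^+ m)).
rewrite (big_cat_nat (leq0n _) le_rb_M) /= big1_seq => [|m /andP[_]]; last first.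
  by rewrite mem_index_iota => /andP[_ lt_m]; rewrite coefz_lt0 ?mul0r //; lia.
rewrite add0r -{1}[(b + r)%N]add0n big_addn big_mkord mulr_sumr; apply: eq_bigr => k _.
rewrite exprD mulrA mulrC; congr (_ * (_ * _)).
by rewrite -[p`_ _]/(coefz p (k.*2 + b)%N); congr coefz; lia.
Qed.

Lemma horner_even_poly_wide K : (size p <= K.*2)%N ->
  (even_poly p).[t] = \sum_(k < K) p`_k.*2 * t ^+ k.
Proof.
move=> le_p_K; rewrite (@horner_coef_wide _ K); last first.
  by apply: leq_trans (size_even_poly p) _; lia.
by apply: eq_bigr => k _; rewrite coef_even_poly.
Qed.

Lemma horner_odd_poly_wide K : (size p <= K.*2.+1)%N ->
  (odd_poly p).[t] = \sum_(k < K) p`_k.*2.+1 * t ^+ k.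
Proof.
move=> le_p_K; rewrite (@horner_coef_wide _ K); last first.
  by apply: leq_trans (size_odd_poly p) _; lia.
by apply: eq_bigr => k _; rewrite coef_odd_poly.
Qed.

Variable N : nat.
Hypotheses (size_p : (size p <= N.+1)%N) (even_root : (even_poly p).[t] = 0)
  (odd_root : t * (odd_poly p).[t] = 0).

Lemma hurwitz_row_eq0 i :
  (i < N)%N -> \sum_(m < N) coefz p ((2 * m)%N%:Z - (N.-1 - i)%N%:Z) * t ^+ m = 0.
Proof.
move=> lt_iN; have := odd_double_half (N.-1 - i); move: (odd _) (_./2) => b r s_eq.
rewrite -s_eq sum_coefz_shift; last by lia.
case: b s_eq => s_eq.
- under eq_bigr do rewrite addn1.
  rewrite -(@horner_odd_poly_wide (N - (true + r))%N); last by lia.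
  by rewrite [(true + r)%N]add1n exprS mulrAC odd_root mul0r.
- under eq_bigr do rewrite addn0.
  by rewrite -(@horner_even_poly_wide (N - (false + r))%N) ?even_root ?mulr0 //; lia.
Qed.

Lemma hurwitz_row_rev i : (i < N)%N ->
  \sum_(j < N) coefz p (N%:Z - 2%:Z * (j.+1)%:Z + (i.+1)%:Z) * t ^+ (N.-1 - j) =
  \sum_(m < N) coefz p ((2 * m)%N%:Z - (N.-1 - i)%N%:Z) * t ^+ m.
Proof.
move=> lt_iN; rewrite (reindex_inj rev_ord_inj); apply: eq_bigr => m _ /=.
have lt_mN := ltn_ord m.
by congr (coefz p _ * t ^+ _); lia.
Qed.

Lemma hurwitz_mx_kernel k :
  (N.-1 <= k)%N -> (k <= N)%N -> hurwitz_mx p N k *m \col_(j < k) t ^+ (N.-1 - j) = 0.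
Proof.
move=> le_k le_kN; apply/matrixP => i j0.
rewrite !mxE; under eq_bigr do rewrite !mxE.
have lt_iN : (i < N)%N by rewrite (leq_trans (ltn_ord i)).
rewrite -[RHS](hurwitz_row_eq0 lt_iN) -hurwitz_row_rev //.
have [<- //|ltkN] := eqVneq k N.
have -> : N = k.+1 by lia.
by rewrite [RHS]big_ord_recr /= coefz_lt0 ?mul0r ?addr0 //; have := ltn_ord i; lia.
Qed.

End HurwitzKernel.

Lemma det_eq0_of_kernel (F : fieldType) k (A : 'M[F]_k) (v : 'cV_k) :
  v != 0 -> A *m v = 0 -> \det A = 0.
Proof.
move=> v_neq0 Av0; rewrite -det_tr; apply/eqP/det0P; exists v^T.
  by rewrite trmx_eq0.
by rewrite -trmx_mul Av0 trmx0.
Qed.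

Section HurwitzDet.
Variables (F : fieldType) (p : {poly F}) (N : nat) (t : F).
Hypotheses (size_p : (size p <= N.+1)%N) (even_root : (even_poly p).[t] = 0)
  (odd_root : t * (odd_poly p).[t] = 0).

Lemma det_hurwitz_mx_eq0 : (0 < N)%N -> \det (hurwitz_mx p N N) = 0.
Proof.
move=> N_gt0.
have kerH := hurwitz_mx_kernel size_p even_root odd_root (leq_pred N) (leqnn N).
apply: det_eq0_of_kernel kerH.
have lt_N1N : (N.-1 < N)%N by rewrite ltn_predL.
apply/eqP => /matrixP /(_ (Ordinal lt_N1N) 0).
by rewrite !mxE subnn expr0 => /eqP; rewrite oner_eq0.
Qed.

Lemma det_hurwitz_minor_eq0 : (1 < N)%N -> t != 0 -> \det (hurwitz_mx p N N.-1) = 0.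
Proof.
move=> N_gt1 t_neq0.
have kerH := hurwitz_mx_kernel size_p even_root odd_root (leqnn N.-1) (leq_pred N).
apply: det_eq0_of_kernel kerH.
have N1_gt0 : (0 < N.-1)%N by rewrite -ltnS prednK // ltnW.
apply/eqP => /matrixP /(_ (Ordinal N1_gt0) 0).
by rewrite !mxE => /eqP; rewrite expf_eq0 (negPf t_neq0) andbF.
Qed.

End HurwitzDet.

Section ImaginaryAxis.
Variable R : realFieldType.
Local Open Scope complex_scope.

Lemma sqr_imaginary (y : R) : (0 +i* y) ^+ 2 = (- y ^+ 2)%:C.
Proof. by apply/eqP; rewrite expr2 eq_complex /= !mul0r !mulr0 sub0r addr0 !eqxx. Qed.

Lemma root_imaginary_even_odd (p : {poly R}) (y : R) :
  root (map_poly (real_complex R) p) (0 +i* y) ->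
  (even_poly p).[- y ^+ 2] = 0 /\ y * (odd_poly p).[- y ^+ 2] = 0.
Proof.
rewrite -{1}[p]poly_even_odd /root rmorphD rmorphM /= !map_comp_poly.
rewrite map_polyXn map_polyX hornerD hornerM !horner_comp hornerXn hornerX sqr_imaginary.
rewrite !horner_map eq_complex /= !mulr0 !mul0r subr0 !addr0 add0r.
by case/andP => /eqP-> /eqP; rewrite mulrC.
Qed.

End ImaginaryAxis.

Lemma map_Dpoly (F K : comNzRingType) (f : {rmorphism F -> K}) n c :
  map_poly f (Dpoly n c) = Dpoly n (f c).
Proof.
rewrite /Dpoly rmorphD rmorph_prod /= map_polyC /= rmorphM rmorphXn rmorphN1.
by congr (_ + _); apply: eq_bigr => j _; rewrite rmorphB /= map_polyX map_polyC /= rmorph_nat.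
Qed.

Section ShiftedD.
Variables (F : fieldType) (n : nat) (c : F).

Lemma map_Dshift (K : fieldType) (f : {rmorphism F -> K}) :
  map_poly f (Dshift n c) = Dshift n (f c).
Proof.
by rewrite map_comp_poly map_Dpoly rmorphB /= map_polyX map_polyC /= fmorphV rmorph_nat.
Qed.

Lemma root_Dshift x : root (Dshift n c) x = root (Dpoly n c) (x - 2%:R^-1).
Proof. by rewrite /root horner_comp hornerXsubC. Qed.

Lemma size_Dshift : (size (Dshift n c) <= (2 * n).+1)%N.
Proof.
have size_D : (size (Dpoly n c) <= (2 * n).+1)%N.
  apply: leq_trans (size_polyD _ _) _.
  rewrite geq_max size_prod_XsubC /index_enum -enumT size_enum_ord leqnn /=.
  exact: leq_trans (size_polyC_leq1 _) _.
apply: leq_trans (size_comp_poly_leq _ _) _.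
by rewrite size_XsubC /= muln1; case: (size _) size_D.
Qed.

Lemma coef0_Dshift : (Dshift n c)`_0 = q0 F n + (-1) ^+ n * c.
Proof. by rewrite /q0 /Dshift /Dpoly !comp_polyD !comp_polyC !coefD !coefC mulr0 addr0. Qed.

Lemma hurwitz_blockE k : hurwitz_block n c k = hurwitz_mx (Dshift n c) (2 * n) k.
Proof.
apply/matrixP => i j; rewrite !mxE; case: (_ + _) => //= m.
by case: leqP => // lt_m; rewrite nth_default // (leq_trans size_Dshift).
Qed.

End ShiftedD.

Theorem lemma4p5 (R : rcfType) (n : nat) (c : R) (z : R[i]) :
  (0 < n)%N ->
  root (Dpoly n (c%:C)%C) z ->
  complex.Re z = - 2%:R^-1 ->
  \det (H2n n c) = 0 /\ (c = (-1) ^+ n.-1 * q0 R n \/ hn1 n c = 0).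
Proof.
move=> n_gt0 root_z Re_z; set p := Dshift n c.
have root_iy : root (map_poly (real_complex R) p) (0 +i* complex.Im z)%C.
  rewrite map_Dshift root_Dshift -[2%:R : R[i]](rmorph_nat (real_complex R)) -fmorphV.
  suff -> : ((complex.Im z)*i - (2^-1)%:C)%C = z by [].
  by case: z Re_z {root_z} => a b /= ->; apply/eqP; rewrite eq_complex /= add0r oppr0 addr0 !eqxx.
have [even_root odd_root] := root_imaginary_even_odd root_iy.
set t := - _ ^+ 2 in even_root odd_root.
have {}odd_root : t * (odd_poly p).[t] = 0.
  by rewrite mulNr expr2 -mulrA odd_root mulr0 oppr0.
have size_p : (size p <= (2 * n).+1)%N := size_Dshift n c.
rewrite /H2n /hn1 !hurwitz_blockE; split.
  by apply: det_hurwitz_mx_eq0 size_p even_root odd_root _; rewrite muln_gt0.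
have [t0|t_neq0] := eqVneq t 0; last first.
  by right; apply: det_hurwitz_minor_eq0 size_p even_root odd_root _ t_neq0; lia.
left; move: even_root; rewrite t0 horner_coef0 coef_even_poly coef0_Dshift.
have sign_n : (-1) ^+ n = - (-1) ^+ n.-1 :> R by rewrite -{1}(prednK n_gt0) exprS mulN1r.
rewrite sign_n mulNr => /eqP; rewrite subr_eq0 => /eqP->.
by rewrite mulrA -exprMn mulrNN mulr1 expr1n mul1r.
Qed.
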